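(* Fix $\alpha\in[0,1)$, $\beta\in(0,1)$, $Q=1-\alpha$, $S=1-\beta$. For the combined clumsy-careless collector, with $\mu_n^{\alpha,\beta}:=\mathbb P_{\nu_n^{\alpha,\beta}}(K_0<n,K_1=n)$ and $T_n^{\alpha,\beta}$ the first post-thinning completion time, there are constants $C,c\in(0,\infty)$ depending only on $\alpha,\beta$ such that for all sufficiently large $n$, \[\sup_{A\subseteq[n]}\mathbb P_A\left(\mu_n^{\alpha,\beta}T_n^{\alpha,\beta}>x\right)\le Ce^{-cx},\qquad x\ge0,\] where $\mathbb P_A$ denotes the process started from the set $A$ of present types. In particular this holds for the empty initial collection.
   Context: Combined clumsy-careless collector on $n$ types: the state is the set of present types. In each round one type is drawn uniformly from $[n]$ independently; it is refreshed to present with probability $Q$ and to absent with probability $\alpha$; then every currently present coupon is independently retained with probability $S$. Completion is checked after thinning: $T_n^{\alpha,\beta}=\inf\{t\ge0:\text{all } n \text{ types present at time } t\}$. $K_t$ is the number of present types; it is a Markov chain on $\{0,\dots,n\}$ (given $K_t=k$: with probability $k/n$, $K_{t+1}\sim\mathrm{Bin}(k-1,S)+\mathrm{Bernoulli}(QS)$; with probability $(n-k)/n$, $K_{t+1}\sim\mathrm{Bin}(k,S)+\mathrm{Bernoulli}(QS)$), irreducible and aperiodic with unique stationary law $\nu_n^{\alpha,\beta}$. *)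

From HB Require Import structures.
From mathcomp Require Import all_boot all_order all_algebra.
From mathcomp Require Import all_classical all_reals all_analysis.
Set Implicit Arguments. Unset Strict Implicit. Unset Printing Implicit Defensive.
Import Order.TTheory GRing.Theory Num.Theory.
Local Open Scope ring_scope.

(* Probability that independent S-thinning (S = 1 - beta) of C yields exactly B *)
Definition thin (R : realType) (n : nat) (beta : R) (C B : {set 'I_n}) : R :=
  if B \subset C then (1 - beta) ^+ #|B| * beta ^+ (#|C| - #|B|) else 0.

(* One-round transition probability A -> B: draw i uniformly, refresh to present
   w.p. Q = 1 - alpha, to absent w.p. alpha, then thin all present coupons. *)
Definition ccTrans (R : realType) (n : nat) (alpha beta : R)
    (A B : {set 'I_n}) : R :=
  (n%:R)^-1 * \sum_(i : 'I_n)
      ((1 - alpha) * thin beta (i |: A) B + alpha * thin beta (A :\ i) B).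

(* ccSurv alpha beta t A = P_A(T > t), T = inf {t >= 0 : X_t = [n]}. *)
Fixpoint ccSurv (R : realType) (n : nat) (alpha beta : R) (t : nat)
    (A : {set 'I_n}) : R :=
  if A == [set: 'I_n] then 0 else
  match t with
  | 0 => 1
  | t'.+1 => \sum_(B : {set 'I_n}) ccTrans alpha beta A B * ccSurv alpha beta t' B
  end.

Definition binp (R : realType) (m : nat) (p : R) (j : nat) : R :=
  ('C(m, j))%:R * p ^+ j * (1 - p) ^+ (m - j).

(* law of Bin(m, S) + Bernoulli(Q S) (independent) at j *)
Definition binBern (R : realType) (alpha beta : R) (m j : nat) : R :=
  let S := 1 - beta in let Q := 1 - alpha in
  (1 - Q * S) * binp m S j
  + Q * S * (if j is j'.+1 then binp m S j' else 0).

Definition Ktrans (R : realType) (n : nat) (alpha beta : R)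
    (k j : 'I_n.+1) : R :=
  (k%:R / n%:R) * binBern alpha beta (k.-1) j
  + ((n - k)%:R / n%:R) * binBern alpha beta k j.

Definition Kstationary (R : realType) (n : nat) (alpha beta : R)
    (nu : 'I_n.+1 -> R) : Prop :=
  (forall k, 0 <= nu k) /\ \sum_(k : 'I_n.+1) nu k = 1 /\
  (forall j, \sum_(k : 'I_n.+1) nu k * Ktrans alpha beta k j = nu j).

Definition ccMu (R : realType) (n : nat) (alpha beta : R) (nu : 'I_n.+1 -> R) : R :=
  \sum_(k : 'I_n.+1 | (k < n)%N) nu k * Ktrans alpha beta k ord_max.

From HB Require Import structures.
From mathcomp Require Import all_boot all_order all_algebra.
From mathcomp Require Import all_classical all_reals all_analysis.
From mathcomp Require Import lra ring zify.
Import Order.TTheory GRing.Theory Num.Theory.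
Local Open Scope ring_scope.
Set Implicit Arguments. Unset Strict Implicit.

(* The number of present types rises by at most one per round, and from k < n
   present types it rises with probability at least
   p_k = (n - k)/n * Q * S^(k+1).  Hence G_k = prod_(i<k) (1 + 1/p_i) is a
   Lyapunov function with drift at least 1 off the full set: the mean
   completion time is at most G_n from any start, and Markov's inequality with
   the Markov property gives a geometric tail on the time scale e * G_n.
   The counting chain is skip-free upwards, so mu_n = nu(n-1) p_(n-1), and the
   balance of the stationary mass above each level i yields
   nu(i+1) (1 - gam^(i+1)) <= nu(i) p_i with gam = 1 - beta^2.  Multiplying,
   mu_n G_n <= prod (1 + p_i) / prod (1 - gam^(i+1)) <= e^(1/beta) e^(1/beta^4),
   so time rescaled by mu_n has a tail exp(-c x) uniformly in n. *)

Lemma bernoulli_inequality (R : realDomainType) m (x : R) :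
  0 <= x -> 1 + m%:R * x <= (1 + x) ^+ m.
Proof.
move=> x_ge0; elim: m => [|m IH]; first by rewrite mul0r addr0 expr0.
rewrite exprSr -natr1; apply: le_trans (_ : (1 + m%:R * x) * (1 + x) <= _).
  have : 0 <= m%:R * x * x by rewrite !mulr_ge0.
  by rewrite mulrDl mulrDr; lra.
by rewrite ler_wpM2r // addr_ge0.
Qed.

Lemma prod1D_le_expR (R : realType) m (x : nat -> R) : (forall i, 0 <= x i) ->
  \prod_(i < m) (1 + x i) <= expR (\sum_(i < m) x i).
Proof.
move=> x_ge0; rewrite expR_sum; apply: ler_prod => i _.
by rewrite expR_ge1Dx andbT addr_ge0.
Qed.

Lemma sum_exprS_le (R : realFieldType) m (y : R) : 0 <= y -> y < 1 ->
  \sum_(i < m) y ^+ i.+1 <= (1 - y)^-1.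
Proof.
move=> y_ge0 y_lt1; have y1_gt0 : 0 < 1 - y by rewrite subr_gt0.
apply: (@le_trans _ _ (\sum_(i < m) y ^+ i)).
  by apply: ler_sum => i _; rewrite exprS ler_piMl ?exprn_ge0 // ltW.
rewrite -div1r ler_pdivlMr // mulrC -opprB mulNr -subrX1 opprB lerBlDr lerDl.
exact: exprn_ge0.
Qed.

Lemma invr1B_le (R : realFieldType) (g b : R) : 0 < b -> 0 <= g -> g <= 1 - b ->
  (1 - g)^-1 <= 1 + g / b.
Proof.
move=> b_gt0 g_ge0 g_le; have g1_gt0 : 0 < 1 - g by lra.
rewrite -div1r ler_pdivrMr //.
have -> : (1 + g / b) * (1 - g) = 1 + g * (1 - g - b) / b by field; rewrite gt_eqF.
by rewrite lerDl; apply: divr_ge0; [apply: mulr_ge0|]; lra.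
Qed.

Lemma ler_sum_ord_support (R : numDomainType) (f : nat -> R) N M :
  (forall j, 0 <= f j) -> (forall j, (M <= j)%N -> f j = 0) ->
  \sum_(j < N) f j <= \sum_(j < M) f j.
Proof.
move=> f_ge0 f_eq0; rewrite -!(big_mkord xpredT f).
apply: (@le_trans _ _ (\sum_(0 <= j < N + M) f j)).
  by rewrite (@big_cat_nat _ _ _ N 0 (N + M) _ _ (leq0n N) (leq_addr M N)) /= lerDl sumr_ge0.
rewrite (@big_cat_nat _ _ _ M 0 (N + M) _ _ (leq0n M) (leq_addl N M)) /=.
rewrite [X in _ + X]big1_seq ?addr0 //.
by move=> j /andP[_]; rewrite mem_index_iota => /andP[/f_eq0].
Qed.

Lemma sum_ord_pick (R : numDomainType) (F : nat -> R) m N : (m < N)%N ->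
  \sum_(j < N) (if j == m :> nat then F j else 0) = F m.
Proof. by move=> m_lt_N; rewrite -big_mkcond big_ord1_eq m_lt_N. Qed.

Lemma sum_gt_le_next2 (R : numDomainType) (F : nat -> R) i N : (forall j, 0 <= F j) ->
  (forall j, (i.+2 < j)%N -> F j = 0) ->
  \sum_(j < N | (i < j)%N) F j <= F i.+1 + F i.+2.
Proof.
move=> F_ge0 F_eq0.
have pick_le m : \sum_(j < N) (if j == m :> nat then F j else 0) <= F m.
  by rewrite -big_mkcond big_ord1_eq; case: ifP.
apply: le_trans (lerD (pick_le i.+1) (pick_le i.+2)); rewrite -big_split big_mkcond /=.
apply: ler_sum => j _.
case: (eqVneq (j : nat) i.+1) => [->|ne1].
  by rewrite ltnSn (ltn_eqF (ltnSn _)) addr0.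
case: (eqVneq (j : nat) i.+2) => [->|ne2].
  by rewrite (ltn_trans (ltnSn i) (ltnSn _)) ?eqxx add0r.
rewrite add0r; case: ifP => // i_lt_j; rewrite F_eq0 //; lia.
Qed.

Lemma truncn_div_tail (R : archiRealFieldType) (mu G K c x : R) :
  0 < mu -> 0 <= G -> 0 <= c -> mu * (G * c + 1) <= K * c + 1 -> 0 <= x ->
  - ((Num.truncn (x / mu))%:R / (G * c + 1)) <= 1 - x / (K * c + 1).
Proof.
move=> mu_gt0 G_ge0 c_ge0 L_ge x_ge0; set t := Num.truncn _.
have L'_ge1 : 1 <= G * c + 1 by rewrite lerDr mulr_ge0.
have L'_gt0 : 0 < G * c + 1 by apply: lt_le_trans L'_ge1.
have muL'_gt0 : 0 < mu * (G * c + 1) by rewrite mulr_gt0.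
have x_lt : x / mu < t%:R + 1 by rewrite natr1 truncnS_gt.
have : x / (K * c + 1) <= t%:R / (G * c + 1) + 1.
  apply: le_trans (_ : x / (mu * (G * c + 1)) <= _).
    by rewrite ler_wpM2l // lef_pV2 ?posrE // (lt_le_trans muL'_gt0).
  rewrite invfM mulrA; apply: (@le_trans _ _ ((t%:R + 1) / (G * c + 1))).
    by rewrite ler_wpM2r ?invr_ge0 ?ltW.
  by rewrite mulrDl lerD2l mul1r invf_le1.
lra.
Qed.

Section Survival.
Variables (R : realType) (T : finType) (P : T -> T -> R) (target : pred T).
Hypothesis P_ge0 : forall x y, 0 <= P x y.
Hypothesis P_sum1 : forall x, \sum_y P x y = 1.

Fixpoint surv (t : nat) (x : T) : R :=
  if target x then 0 else if t is t'.+1 then \sum_y P x y * surv t' y else 1.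

Lemma survS t x :
  surv t.+1 x = if target x then 0 else \sum_y P x y * surv t y.
Proof. by []. Qed.

Lemma surv_target t x : target x -> surv t x = 0.
Proof. by case: t => [|t] /= ->. Qed.

Lemma surv_ge0 t x : 0 <= surv t x.
Proof.
elim: t x => [|t IH] x /=; case: ifP => // _.
by rewrite sumr_ge0 // => y _; rewrite mulr_ge0.
Qed.

Lemma surv_le1 t x : surv t x <= 1.
Proof.
elim: t x => [|t IH] x /=; case: ifP => // _.
by rewrite -(P_sum1 x) ler_sum // => y _; rewrite ler_piMr.
Qed.

Lemma surv_nonincreasing s t x : (s <= t)%N -> surv t x <= surv s x.
Proof.
have survSn_le r y : surv r.+1 y <= surv r y.
  elim: r y => [|r IH] y; first by have := surv_le1 1 y; rewrite /=; case: ifP.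
  rewrite !survS; case: ifP => // _.
  by rewrite ler_sum // => z _; rewrite ler_wpM2l.
move=> /subnK <-; elim: (t - s)%N => [|d IH] //.
by rewrite addSn (le_trans (survSn_le _ _)).
Qed.

Lemma surv_addn_le m a :
  (forall y, surv m y <= a) -> forall s x, surv (s + m) x <= a * surv s x.
Proof.
move=> surv_m; elim=> [|s IH] x.
  rewrite add0n /=; case: ifP => [x_target|_]; last by rewrite mulr1.
  by rewrite surv_target // mulr0.
rewrite addSn !survS; case: ifP => _; first by rewrite mulr0.
by rewrite mulr_sumr ler_sum // => y _; rewrite mulrCA ler_wpM2l.
Qed.

Lemma surv_muln_le m a :
  (forall y, surv m y <= a) -> forall k x, surv (k * m) x <= a ^+ k.
Proof.
move=> surv_m; elim=> [|k IH] x; first by rewrite /=; case: ifP.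
have a_ge0 : 0 <= a := le_trans (surv_ge0 m x) (surv_m x).
rewrite mulSn addnC exprS (le_trans (surv_addn_le surv_m _ _)) //.
by rewrite ler_wpM2l.
Qed.

Lemma surv_le_expR m t x : (0 < m)%N -> (forall y, surv m y <= expR (-1)) ->
  surv t x <= expR 1 * expR (- (t%:R / m%:R)).
Proof.
move=> m_gt0 surv_m; set k := (t %/ m)%N.
have t_lt : t%:R / m%:R < k%:R + 1 :> R.
  by rewrite ltr_pdivrMr ?ltr0n // natr1 -natrM ltr_nat ltn_ceil.
apply: le_trans (surv_nonincreasing x (leq_divM t m)) _.
apply: le_trans (surv_muln_le surv_m k x) _.
by rewrite -expRM_natl -expRD ler_expR; lra.
Qed.

Section Lyapunov.
Variables (V : T -> R) (M : R).
Hypothesis V_ge0 : forall x, 0 <= V x.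
Hypothesis V_le : forall x, V x <= M.
Hypothesis V_drift : forall x, ~~ target x -> 1 + V x <= \sum_y P x y * V y.

Lemma sum_surv_le t x : \sum_(s < t) surv s x <= M - V x.
Proof.
elim: t x => [|t IH] x; first by rewrite big_ord0 subr_ge0.
rewrite big_ord_recl /=; case: ifP => [_|/negbT x_live].
  by rewrite big1 ?addr0 ?subr_ge0 // => s _; rewrite /= x_live.
under eq_bigr do rewrite add0n.
rewrite exchange_big /=.
under eq_bigr do rewrite -mulr_sumr.
apply: (@le_trans _ _ (1 + \sum_y P x y * (M - V y))).
  by rewrite lerD2l ler_sum // => y _; rewrite ler_wpM2l.
under eq_bigr do rewrite mulrBr.
rewrite sumrB -mulr_suml P_sum1 mul1r.
have := V_drift x_live; lra.
Qed.

Lemma surv_mean_le t x : t.+1%:R * surv t x <= M.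
Proof.
apply: le_trans (_ : _ <= M - V x) _; last by rewrite lerBlDr lerDl.
apply: le_trans (sum_surv_le t.+1 x).
rewrite mulr_natl -[X in _ *+ X](card_ord t.+1) -sumr_const.
by apply: ler_sum => s _; apply: surv_nonincreasing; rewrite -ltnS.
Qed.

(* Markov's inequality at m = trunc (M e) + 1 gives surv m <= e^-1; iterate. *)
Lemma surv_le_expR_lyapunov t x :
  surv t x <= expR 1 * expR (- (t%:R / (M * expR 1 + 1))).
Proof.
have M_ge0 : 0 <= M := le_trans (V_ge0 x) (V_le x).
have e_gt0 : 0 < expR 1 :> R := expR_gt0 1.
have Me_ge0 : 0 <= M * expR 1 by rewrite mulr_ge0 // ltW.
set m := (Num.truncn (M * expR 1)).+1.
have Me_lt_m : M * expR 1 < m%:R by apply: truncnS_gt.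
have m_le : m%:R <= M * expR 1 + 1 by rewrite -natr1 lerD2r truncn_le.
have surv_m y : surv m y <= expR (-1).
  have s_ge0 := surv_ge0 m y.
  have s_le : surv m y * (M * expR 1 + 1) <= M.
    apply: le_trans (surv_mean_le m y); rewrite mulrC ler_wpM2r //.
    by rewrite -natr1 lerD2r ltW.
  rewrite expRN -div1r ler_pdivlMr // -(@ler_pM2r _ (M * expR 1 + 1)) ?ltr_wpDl //.
  by rewrite mul1r mulrAC (le_trans (ler_wpM2r (ltW e_gt0) s_le)) // lerDl.
apply: le_trans (surv_le_expR t x (ltn0Sn _) surv_m) _.
rewrite ler_pM2l // ler_expR lerN2 -/m ler_pdivlMr ?ltr0n //.
by rewrite mulrAC ler_pdivrMr ?ltr_wpDl // ler_wpM2l.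
Qed.

End Lyapunov.
End Survival.

Section Collector.
Variables (R : realType) (alpha beta : R).
Hypotheses (alpha_ge0 : 0 <= alpha) (alpha_lt1 : alpha < 1).
Hypotheses (beta_gt0 : 0 < beta) (beta_lt1 : beta < 1).
Local Notation S := (1 - beta).
Local Notation Q := (1 - alpha).
Local Notation gam := (1 - beta ^+ 2).

Lemma S_gt0 : 0 < S. Proof. by rewrite subr_gt0. Qed.
Lemma S_ge0 : 0 <= S. Proof. exact: ltW S_gt0. Qed.
Lemma S_le1 : S <= 1. Proof. by rewrite lerBlDr lerDl ltW. Qed.
Lemma Q_gt0 : 0 < Q. Proof. by rewrite subr_gt0. Qed.
Lemma Q_ge0 : 0 <= Q. Proof. exact: ltW Q_gt0. Qed.
Lemma Q_le1 : Q <= 1. Proof. by rewrite lerBlDr lerDl. Qed.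

Lemma thin_ge0 n (C B : {set 'I_n}) : 0 <= thin beta C B.
Proof.
rewrite /thin; case: ifP => _ //.
by rewrite mulr_ge0 ?exprn_ge0 ?S_ge0 // ltW.
Qed.

(* Expand [1 = \prod_(i in C) (S + beta)] over the subsets of C. *)
Lemma thin_sum n (C : {set 'I_n}) : \sum_B thin beta C B = 1.
Proof.
pose F i := if i \in C then S else 0.
pose G i := if i \in C then beta else 1.
have <- : \prod_i (F i + G i) = 1.
  by rewrite big1 // => i _; rewrite /F /G; case: ifP; rewrite ?subrK ?add0r.
rewrite bigA_distr; apply: eq_bigr => B _; rewrite /thin.
case: ifPn => [BsubC | /fintype.subsetPn [i iB iNC]]; last first.
  by rewrite (bigD1 i) //= iB /F (negbTE iNC) mul0r.
rewrite (bigID (mem B)) /= (eq_bigr (fun=> S)); last first.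
  by move=> i iB; rewrite iB /F (fintype.subsetP BsubC i iB).
rewrite prodr_const (eq_bigr G) => [|i /negbTE -> //].
rewrite -big_mkcondr /= prodr_const.
congr (_ * _ ^+ _).
have -> : #|[pred i | (i \notin B) && (i \in C)]| = #|C :\: B|.
  by apply: eq_card => i; rewrite !inE.
by rewrite cardsD (finset.setIidPr BsubC).
Qed.

Lemma ccTrans_ge0 n (A B : {set 'I_n}) : 0 <= ccTrans alpha beta A B.
Proof.
rewrite /ccTrans mulr_ge0 ?invr_ge0 ?ler0n // sumr_ge0 // => i _.
by rewrite addr_ge0 // mulr_ge0 ?thin_ge0 ?Q_ge0.
Qed.

Lemma ccTrans_sum1 n (A : {set 'I_n}) : (0 < n)%N ->
  \sum_B ccTrans alpha beta A B = 1.
Proof.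
move=> n_gt0; rewrite /ccTrans -mulr_sumr exchange_big /=.
under eq_bigr do rewrite big_split /= -!mulr_sumr !thin_sum !mulr1 subrK.
by rewrite sumr_const card_ord mulVf // pnatr_eq0 -lt0n.
Qed.

Lemma ccTrans_setU1_ge n (A : {set 'I_n}) i : i \notin A ->
  n%:R^-1 * (Q * S ^+ #|A|.+1) <= ccTrans alpha beta A (i |: A).
Proof.
move=> iNA; rewrite /ccTrans ler_wpM2l ?invr_ge0 ?ler0n // (bigD1 i) //= -addrA.
have -> : thin beta (i |: A) (i |: A) = S ^+ #|A|.+1.
  by rewrite /thin subxx cardsU1 iNA subnn expr0 mulr1.
rewrite lerDl addr_ge0 ?sumr_ge0 // => [|j _];
  by rewrite ?addr_ge0 ?mulr_ge0 ?thin_ge0 ?Q_ge0.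
Qed.

Lemma ccSurvE n t (A : {set 'I_n}) :
  ccSurv alpha beta t A = surv (ccTrans alpha beta) (pred1 [set: 'I_n]) t A.
Proof.
elim: t A => [|t IH] A //=; case: ifP => // _.
by apply: eq_bigr => B _; rewrite IH.
Qed.

Definition upProb n k : R := (n - k)%:R / n%:R * (Q * S ^+ k.+1).

(* Chosen so that [upProb n k * (lyap n k.+1 - lyap n k) = lyap n k]: climbing
   from k has drift at least 1. *)
Definition lyap n k : R := \prod_(i < k) (1 + (upProb n i)^-1).

Lemma upProb_gt0 n k : (k < n)%N -> 0 < upProb n k.
Proof.
move=> k_lt_n; rewrite /upProb !mulr_gt0 ?invr_gt0 ?ltr0n ?subn_gt0 ?exprn_gt0 //.
- exact: leq_ltn_trans k_lt_n.
- exact: Q_gt0.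
- exact: S_gt0.
Qed.

Lemma lyapS n k : lyap n k.+1 = lyap n k * (1 + (upProb n k)^-1).
Proof. by rewrite /lyap big_ord_recr. Qed.

Lemma lyap_factor_ge1 n k : (k < n)%N -> 1 <= 1 + (upProb n k)^-1.
Proof. by move=> k_lt_n; rewrite lerDl invr_ge0 ltW // upProb_gt0. Qed.

Lemma lyap_ge1 n k : (k <= n)%N -> 1 <= lyap n k.
Proof.
elim: k => [|k IH] k_lt_n; first by rewrite /lyap big_ord0.
by rewrite lyapS mulr_ege1 ?IH ?lyap_factor_ge1 // ltnW.
Qed.

Lemma lyap_le n k l : (k <= l <= n)%N -> lyap n k <= lyap n l.
Proof.
case/andP=> /subnK <-; elim: (l - k)%N => [|d IH] // le_n.
rewrite addSn lyapS (le_trans (IH (ltnW le_n))) // ler_peMr ?lyap_factor_ge1 //.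
by rewrite (le_trans ler01) // lyap_ge1 // ltnW.
Qed.

Lemma card_lt_setT n (A : {set 'I_n}) : A != [set: 'I_n] -> (#|A| < n)%N.
Proof. by rewrite -properT => /proper_card; rewrite cardsT card_ord. Qed.

Lemma upProb_lyap_incr n k : (k < n)%N ->
  upProb n k * (lyap n k.+1 - lyap n k) = lyap n k.
Proof.
by move=> k_lt_n; rewrite lyapS; field; rewrite gt_eqF ?upProb_gt0.
Qed.

(* Each of the n - k absent types can be drawn, refreshed, and kept by the
   thinning together with the k present ones. *)
Lemma ccTrans_up_ge n (A : {set 'I_n}) :
  upProb n #|A| <= \sum_(i in ~: A) ccTrans alpha beta A (i |: A).
Proof.
apply: le_trans (ler_sum _ (fun i iNA => ccTrans_setU1_ge _)) => [|i]; last first.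
  by rewrite inE.
rewrite sumr_const (_ : #|~: A| = n - #|A|)%N; last first.
  by rewrite cardsCs finset.setCK card_ord.
by rewrite -(mulr_natl (_ * _)) /upProb mulrA.
Qed.

Lemma lyap_drift n (A : {set 'I_n}) : A != [set: 'I_n] ->
  1 + lyap n #|A| <= \sum_B ccTrans alpha beta A B * lyap n #|B|.
Proof.
move=> A_neq; have k_lt_n := card_lt_setT A_neq; set k := #|A| in k_lt_n *.
have n_gt0 : (0 < n)%N by apply: leq_ltn_trans k_lt_n.
have lyap_ge1' (B : {set 'I_n}) : 1 <= lyap n #|B|.
  by apply: lyap_ge1; rewrite -[X in (_ <= X)%N](card_ord n) max_card.
have -> : \sum_B ccTrans alpha beta A B * lyap n #|B| =
    1 + \sum_B ccTrans alpha beta A B * (lyap n #|B| - 1).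
  rewrite -{1}(ccTrans_sum1 A n_gt0) -big_split /=; apply: eq_bigr => B _; ring.
rewrite lerD2l; apply: (@le_trans _ _ (upProb n k * (lyap n k.+1 - 1))).
  rewrite -[X in X <= _](upProb_lyap_incr k_lt_n).
  apply: ler_wpM2l; first exact: ltW (upProb_gt0 k_lt_n).
  by rewrite lerD2l lerN2 lyap_ge1 // ltnW.
have setU1_inj : {in ~: A &, injective (fun i => i |: A)}.
  move=> i j; rewrite !inE => iNA jNA ijA.
  by have := setU11 i A; rewrite ijA in_setU1 (negbTE iNA) orbF => /eqP.
rewrite (bigID (mem [set i |: A | i in ~: A])) /= -[X in X <= _]addr0 lerD //;
  last by rewrite sumr_ge0 // => B _; rewrite mulr_ge0 ?ccTrans_ge0 // subr_ge0.
rewrite big_imset //= (eq_bigr (fun i => ccTrans alpha beta A (i |: A) * (lyap n k.+1 - 1))).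
  by rewrite -mulr_suml ler_wpM2r ?ccTrans_up_ge // subr_ge0 lyap_ge1.
by move=> i; rewrite inE cardsU1 => ->.
Qed.

Lemma ccSurv_le_expR n t (A : {set 'I_n}) : (0 < n)%N ->
  ccSurv alpha beta t A <= expR 1 * expR (- (t%:R / (lyap n n * expR 1 + 1))).
Proof.
move=> n_gt0; have card_le (B : {set 'I_n}) : (#|B| <= n)%N.
  by rewrite -[X in (_ <= X)%N](card_ord n) max_card.
rewrite ccSurvE; apply: (surv_le_expR_lyapunov (@ccTrans_ge0 n)
  (fun B => ccTrans_sum1 B n_gt0) (V := fun B => lyap n #|B|)).
- by move=> B; rewrite (le_trans ler01) ?lyap_ge1.
- by move=> B; apply: lyap_le; rewrite card_le leqnn.
- exact: lyap_drift.
Qed.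

Lemma binp_ge0 m j : 0 <= binp m S j.
Proof. by rewrite /binp !mulr_ge0 ?exprn_ge0 ?S_ge0 // subr_ge0 S_le1. Qed.

Lemma binp_small m j : (m < j)%N -> binp m S j = 0.
Proof. by move=> m_lt_j; rewrite /binp bin_small // mulr0n !mul0r. Qed.

Lemma binp_diag m : binp m S m = S ^+ m.
Proof. by rewrite /binp binn subnn expr0 mulr1 mul1r. Qed.

Lemma binp_sum m N : \sum_(j < N) binp m S j <= 1.
Proof.
have binp_sum1 : \sum_(j < m.+1) binp m S j = 1.
  rewrite -[RHS](expr1n _ m) -[X in X ^+ m](subrK S) exprDn.
  by apply: eq_bigr => j _; rewrite /binp -mulr_natl; ring.
rewrite -[X in _ <= X]binp_sum1; apply: ler_sum_ord_support => j.
  exact: binp_ge0.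
exact: binp_small.
Qed.

Lemma QS_le1 : Q * S <= 1.
Proof. by rewrite mulr_ile1 ?Q_ge0 ?S_ge0 ?Q_le1 ?S_le1. Qed.

Lemma QS_ge0 : 0 <= Q * S.
Proof. by rewrite mulr_ge0 ?Q_ge0 ?S_ge0. Qed.

Lemma binBern_ge0 m j : 0 <= binBern alpha beta m j.
Proof.
rewrite /binBern addr_ge0 // mulr_ge0 ?QS_ge0 ?binp_ge0 ?subr_ge0 ?QS_le1 //.
by case: j => // j; rewrite binp_ge0.
Qed.

Lemma binBern_small m j : (m.+1 < j)%N -> binBern alpha beta m j = 0.
Proof.
case: j => // j m_lt_j; rewrite /binBern !binp_small ?mulr0 ?addr0 //.
exact: ltnW.
Qed.

Lemma binBern_sum m N : \sum_(j < N) binBern alpha beta m j <= 1.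
Proof.
case: N => [|N]; first by rewrite big_ord0.
rewrite big_split /= -!mulr_sumr [X in _ + _ * X]big_ord_recl /= add0r.
apply: (@le_trans _ _ ((1 - Q * S) * 1 + Q * S * 1)); last by rewrite !mulr1 subrK.
by rewrite lerD ?ler_wpM2l ?binp_sum ?QS_ge0 ?subr_ge0 ?QS_le1.
Qed.

(* [Ktrans] on plain naturals, so that indices need no ordinal bookkeeping. *)
Definition Kstep n (k j : nat) : R :=
  k%:R / n%:R * binBern alpha beta k.-1 j
  + (n - k)%:R / n%:R * binBern alpha beta k j.

Lemma KtransE n (k j : 'I_n.+1) : Ktrans alpha beta k j = Kstep n k j.
Proof. by []. Qed.

Lemma Kstep_ge0 n k j : 0 <= Kstep n k j.
Proof. by rewrite /Kstep addr_ge0 // mulr_ge0 ?divr_ge0 ?binBern_ge0. Qed.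

Lemma Kstep_small n k j : (k.+1 < j)%N -> Kstep n k j = 0.
Proof.
move=> k_lt_j; rewrite /Kstep !binBern_small ?mulr0 ?addr0 //.
by apply: leq_ltn_trans k_lt_j; case: k.
Qed.

Lemma Kstep_sum n k : (0 < n)%N -> (k <= n)%N -> \sum_(j < n.+1) Kstep n k j <= 1.
Proof.
move=> n_gt0 k_le_n; rewrite big_split /= -!mulr_sumr.
apply: (@le_trans _ _ (k%:R / n%:R * 1 + (n - k)%:R / n%:R * 1)).
  by rewrite lerD // ler_wpM2l ?divr_ge0 ?binBern_sum.
by rewrite !mulr1 -mulrDl -natrD subnKC // divff // pnatr_eq0 -lt0n.
Qed.

Lemma binBern_up m : binBern alpha beta m m.+1 = Q * S ^+ m.+1.
Proof. by rewrite /binBern binp_small // binp_diag mulr0 add0r exprS mulrA. Qed.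

Lemma Kstep_up n k : Kstep n k k.+1 = upProb n k.
Proof.
rewrite /Kstep binBern_up /upProb.
by case: k => [|k]; rewrite ?mulr0n ?mul0r ?binBern_small ?mulr0 ?add0r.
Qed.

(* From k present types, staying at or above k requires all of them (but the
   possibly redrawn one) to survive the thinning: probability at most
   S^k (1 + k beta) <= (S (1 + beta))^k. *)
Lemma Kstep_stay n k : (0 < n)%N -> (k < n)%N ->
  Kstep n k.+1 k.+1 + Kstep n k.+1 k.+2 <= gam ^+ k.+1.
Proof.
move=> n_gt0 k_lt_n.
set a : R := k.+1%:R / n%:R; set b : R := (n - k.+1)%:R / n%:R.
set X := S ^+ k.+1; set c : R := k.+1%:R.
have ab1 : a + b = 1.
  by rewrite /a /b -mulrDl -natrD subnKC // divff // pnatr_eq0 -lt0n.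
have a_ge0 : 0 <= a by rewrite divr_ge0.
have b_ge0 : 0 <= b by rewrite divr_ge0.
have X_ge0 : 0 <= X by rewrite exprn_ge0 ?S_ge0.
have cbX_ge0 : 0 <= c * beta * X by rewrite !mulr_ge0 // ltW.
have Q_le1 := Q_le1; have Q_ge0 := Q_ge0.
have -> : Kstep n k.+1 k.+1 + Kstep n k.+1 k.+2 = a * (Q * X) + b * (X * (1 + Q * c * beta)).
  rewrite Kstep_up /Kstep /= binBern_up /binBern binp_diag /binp binSn subSn //.
  by rewrite subnn /upProb -/a -/b /X /c !exprS; ring.
apply: (@le_trans _ _ ((a + b) * (X * (1 + c * beta)))).
  by rewrite (mulrDl a b); apply: lerD; apply: ler_wpM2l => //; nra.
rewrite ab1 mul1r (_ : gam = S * (1 + beta)); last by ring.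
by rewrite exprMn ler_wpM2l // bernoulli_inequality ?ltW.
Qed.

Lemma gam_ge0 : 0 <= gam.
Proof. by rewrite subr_ge0 expr_le1 ?ltW. Qed.

Lemma gam_lt1 : gam < 1.
Proof. by rewrite ltrBlDr ltrDl exprn_gt0. Qed.

Lemma gamX_lt1 k : gam ^+ k.+1 < 1.
Proof. by rewrite exprn_ilt1 ?gam_ge0 ?gam_lt1. Qed.

Lemma Kstep_tail_below n k i N : (k < i)%N ->
  \sum_(j < N | (i < j)%N) Kstep n k j = 0.
Proof. by move=> k_lt_i; rewrite big1 // => j i_lt_j; rewrite Kstep_small //; lia. Qed.

Lemma Kstep_tail_at n i N : \sum_(j < N | (i < j)%N) Kstep n i j <= upProb n i.
Proof.
apply: le_trans (sum_gt_le_next2 _ (Kstep_ge0 n i) _) _ => [j ij|].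
  by rewrite Kstep_small //; lia.
by rewrite Kstep_up Kstep_small ?addr0.
Qed.

Lemma Kstep_tail_next n i N : (0 < n)%N -> (i < n)%N ->
  \sum_(j < N | (i < j)%N) Kstep n i.+1 j <= gam ^+ i.+1.
Proof.
move=> n_gt0 i_lt_n; apply: le_trans (Kstep_stay n_gt0 i_lt_n).
by apply: sum_gt_le_next2 => [|j]; [exact: Kstep_ge0 | exact: Kstep_small].
Qed.

Lemma Kstep_tail_le1 n k i : (0 < n)%N -> (k <= n)%N ->
  \sum_(j < n.+1 | (i < j)%N) Kstep n k j <= 1.
Proof.
move=> n_gt0 k_le_n; apply: le_trans (Kstep_sum n_gt0 k_le_n).
rewrite [X in _ <= X](bigID (fun j : 'I_n.+1 => (i < j)%N)) /= lerDl.
by rewrite sumr_ge0 // => j _; exact: Kstep_ge0.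
Qed.

Lemma upProb_le n k : (0 < n)%N -> upProb n k <= S ^+ k.+1.
Proof.
move=> n_gt0; rewrite /upProb mulrA ler_piMl ?exprn_ge0 ?S_ge0 //.
rewrite mulr_ile1 ?divr_ge0 ?Q_ge0 ?Q_le1 //.
by rewrite ler_pdivrMr ?ltr0n // mul1r ler_nat leq_subr.
Qed.

Lemma lyap_prod n k : (k <= n)%N ->
  lyap n k * \prod_(i < k) upProb n i = \prod_(i < k) (1 + upProb n i).
Proof.
move=> k_le_n; rewrite -big_split; apply: eq_bigr => i _ /=.
have p_gt0 : 0 < upProb n i by apply: upProb_gt0; apply: leq_trans k_le_n.
by field; rewrite gt_eqF.
Qed.

Lemma prod1D_upProb_le n : (0 < n)%N ->
  \prod_(i < n) (1 + upProb n i) <= expR beta^-1.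
Proof.
move=> n_gt0; apply: le_trans (prod1D_le_expR _ _) _ => [i|].
  by rewrite /upProb !mulr_ge0 ?divr_ge0 ?exprn_ge0 ?Q_ge0 ?S_ge0.
rewrite ler_expR; apply: (@le_trans _ _ (\sum_(i < n) S ^+ i.+1)).
  by apply: ler_sum => i _; apply: upProb_le.
have S_lt1 : S < 1 by rewrite ltrBlDr ltrDl.
by apply: le_trans (sum_exprS_le _ S_ge0 S_lt1) _; rewrite opprB addrC subrK.
Qed.

Lemma inv_prod_1BgamX_le m :
  (\prod_(i < m) (1 - gam ^+ i.+1))^-1 <= expR (beta ^+ 4)^-1.
Proof.
have b2_gt0 : 0 < beta ^+ 2 by rewrite exprn_gt0.
have gX_ge0 i : 0 <= gam ^+ i.+1 by rewrite exprn_ge0 ?gam_ge0.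
rewrite -prodfV; apply: (@le_trans _ _ (\prod_(i < m) (1 + gam ^+ i.+1 / beta ^+ 2))).
  apply: ler_prod => i _; rewrite invr_ge0 subr_ge0 ltW ?gamX_lt1 //=.
  apply: invr1B_le => //.
  by rewrite exprS ler_piMr ?gam_ge0 // exprn_ile1 ?gam_ge0 // ltW // gam_lt1.
apply: le_trans (prod1D_le_expR m (x := fun i => gam ^+ i.+1 / beta ^+ 2) _) _.
  by move=> i; rewrite divr_ge0 ?gX_ge0 ?ltW.
rewrite ler_expR -mulr_suml (le_trans (ler_wpM2r _ (sum_exprS_le _ gam_ge0 gam_lt1))) //.
  by rewrite invr_ge0 ltW.
by rewrite opprB addrC subrK -invfM -exprD.
Qed.

Section Stationary.
Variables (n : nat) (nu0 : 'I_n.+1 -> R).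
Hypothesis n_gt0 : (0 < n)%N.
Hypothesis nu0_stationary : Kstationary alpha beta nu0.

Let nu k := nu0 (inord k).

Lemma nu_ge0 k : 0 <= nu k.
Proof. by case: nu0_stationary => nu0_ge0 _; apply: nu0_ge0. Qed.

Lemma nu_sum1 : \sum_(k < n.+1) nu k = 1.
Proof.
case: nu0_stationary => _ [<- _].
by apply: eq_bigr => k _; rewrite /nu inord_val.
Qed.

Lemma nu_balance j : (j <= n)%N -> nu j = \sum_(k < n.+1) nu k * Kstep n k j.
Proof.
move=> j_le_n; case: nu0_stationary => _ [_ balance].
rewrite /nu -balance; apply: eq_bigr => k _.
by rewrite inord_val KtransE inordK.
Qed.

Lemma nu_le1 k : (k <= n)%N -> nu k <= 1.
Proof.
move=> k_le_n; rewrite -[X in _ <= X]nu_sum1 -(sum_ord_pick nu (k_le_n : k < n.+1)%N).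
by apply: ler_sum => j _; case: ifP => // _; apply: nu_ge0.
Qed.

Lemma nu_inflow_le k j : (k <= n)%N -> (j <= n)%N -> nu k * Kstep n k j <= nu j.
Proof.
move=> k_le_n j_le_n; rewrite (nu_balance j_le_n).
rewrite -(sum_ord_pick (fun l => nu l * Kstep n l j) (k_le_n : k < n.+1)%N).
apply: ler_sum => l _; case: ifP => // _.
by rewrite mulr_ge0 ?nu_ge0 ?Kstep_ge0.
Qed.

(* The mass above i is carried only from i (rate upProb), from i + 1 (rate at
   most gam^(i+1)) and from above i + 1 (rate at most 1). *)
Lemma nu_flux i : (i < n)%N ->
  nu i.+1 * (1 - gam ^+ i.+1) <= nu i * upProb n i.
Proof.
move=> i_lt_n; set d := 1 - _ ^+ i.+1.
pose c k : R := (if k == i then upProb n i else 0) + (if (i < k)%N then 1 else 0)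
  - (if k == i.+1 then d else 0).
have tail_le k : (k <= n)%N -> \sum_(j < n.+1 | (i < j)%N) Kstep n k j <= c k.
  move=> k_le_n; rewrite /c; case: (ltngtP k i) => [k_lt_i|i_lt_k|->].
  - by rewrite Kstep_tail_below // (ltn_eqF (ltn_trans k_lt_i (ltnSn i))) subr0 addr0.
  - rewrite add0r; case: (eqVneq k i.+1) => [->|k_neq].
      by rewrite opprB addrC subrK Kstep_tail_next.
    by rewrite subr0 Kstep_tail_le1.
  - by rewrite (ltn_eqF (ltnSn i)) subr0 addr0 Kstep_tail_at.
have tail_mass : \sum_(j < n.+1 | (i < j)%N) nu j
    = \sum_(k < n.+1) nu k * \sum_(j < n.+1 | (i < j)%N) Kstep n k j.
  rewrite (eq_bigr (fun j : 'I_n.+1 => \sum_(k < n.+1) nu k * Kstep n k j)).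
    by rewrite exchange_big /=; apply: eq_bigr => k _; rewrite mulr_sumr.
  by move=> j _; apply: nu_balance; rewrite -ltnS.
have weighted : \sum_(k < n.+1) nu k * c k
    = nu i * upProb n i + \sum_(k < n.+1 | (i < k)%N) nu k - nu i.+1 * d.
  rewrite /c; under eq_bigr do rewrite mulrBr mulrDr.
  rewrite sumrB big_split /=.
  rewrite -(sum_ord_pick (fun k => nu k * upProb n i) (ltnW i_lt_n : i < n.+1)%N).
  rewrite -(sum_ord_pick (fun k => nu k * d) (i_lt_n : i.+1 < n.+1)%N).
  congr (_ + _ - _); rewrite ?[RHS]big_mkcond; apply: eq_bigr => k _;
    by case: ifP; rewrite ?mulr1 ?mulr0.
have : \sum_(j < n.+1 | (i < j)%N) nu j <= \sum_(k < n.+1) nu k * c k.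
  by rewrite tail_mass ler_sum // => k _; rewrite ler_wpM2l ?nu_ge0 ?tail_le // -ltnS.
rewrite weighted; lra.
Qed.

Lemma nu_prod_le k : (k <= n)%N ->
  nu k * \prod_(i < k) (1 - gam ^+ i.+1) <= \prod_(i < k) upProb n i.
Proof.
elim: k => [|k IH] k_le_n; first by rewrite !big_ord0 mulr1 nu_le1.
have d_ge0 i : 0 <= 1 - gam ^+ i.+1 by rewrite subr_ge0 ltW ?gamX_lt1.
rewrite !big_ord_recr /= mulrA mulrAC.
apply: (@le_trans _ _ (nu k * upProb n k * \prod_(i < k) (1 - gam ^+ i.+1))).
  by apply: ler_wpM2r; [apply: prodr_ge0 | apply: nu_flux].
rewrite mulrAC mulrC [X in _ <= X]mulrC; apply: ler_wpM2l; last exact: IH (ltnW k_le_n).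
exact: ltW (upProb_gt0 k_le_n).
Qed.

Lemma ccMuE : ccMu alpha beta nu0 = nu n.-1 * upProb n n.-1.
Proof.
rewrite /ccMu big_mkcond /=.
rewrite (eq_bigr (fun k : 'I_n.+1 => if k == n.-1 :> nat then nu k * Kstep n k n else 0)).
  rewrite (sum_ord_pick (fun k => nu k * Kstep n k n)); last by rewrite ltnS leq_pred.
  by have := Kstep_up n n.-1; rewrite prednK // => ->.
move=> k _; rewrite KtransE /nu inord_val /=; case: eqP => [->|k_neq].
  by rewrite ltn_predL n_gt0.
by case: ifP => // k_lt_n; rewrite Kstep_small ?mulr0 //; lia.
Qed.

Lemma nu_gt0_up k l : (k <= l < n)%N -> 0 < nu k -> 0 < nu l.
Proof.
move=> /andP[k_le_l l_lt_n] nu_k_gt0; elim: l k_le_l l_lt_n => [|l IH].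
  by rewrite leqn0 => /eqP <-.
rewrite leq_eqVlt => /orP[/eqP <- //|k_le_l] l_lt_n; rewrite ltnS in k_le_l.
have := nu_inflow_le (ltnW (ltnW l_lt_n)) (ltnW l_lt_n); rewrite Kstep_up.
by apply: lt_le_trans; rewrite mulr_gt0 ?IH ?upProb_gt0 // ltnW.
Qed.

Lemma nu_pred_gt0 : 0 < nu n.-1.
Proof.
have /existsP[k nu_k_gt0] : [exists k : 'I_n.+1, 0 < nu k].
  apply: contraT => /existsPn nu_le0.
  have := nu_sum1; rewrite big1 => [/eqP|k _]; first by rewrite eq_sym oner_eq0.
  by apply/eqP; rewrite eq_le nu_ge0 andbT leNgt nu_le0.
have n1_lt_n : (n.-1 < n)%N by rewrite ltn_predL.
have [k_eq_n|k_neq_n] := eqVneq (k : nat) n; last first.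
  by apply: nu_gt0_up nu_k_gt0; rewrite n1_lt_n andbT; have := ltn_ord k; lia.
have := nu_flux n1_lt_n; rewrite prednK // => flux.
rewrite k_eq_n in nu_k_gt0.
have : 0 < nu n.-1 * upProb n n.-1.
  by apply: lt_le_trans flux; rewrite mulr_gt0 // subr_gt0 -(prednK n_gt0) gamX_lt1.
by rewrite pmulr_lgt0 // upProb_gt0.
Qed.

Lemma ccMu_gt0 : 0 < ccMu alpha beta nu0.
Proof. by rewrite ccMuE mulr_gt0 ?nu_pred_gt0 ?upProb_gt0 ?ltn_predL. Qed.

Lemma ccMu_le1 : ccMu alpha beta nu0 <= 1.
Proof.
rewrite ccMuE mulr_ile1 ?nu_ge0 ?nu_le1 ?leq_pred //.
  by rewrite ltW ?upProb_gt0 ?ltn_predL.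
exact: le_trans (upProb_le _ n_gt0) (exprn_ile1 _ S_ge0 S_le1).
Qed.

Lemma ccMu_lyap_le :
  ccMu alpha beta nu0 * lyap n n <= expR beta^-1 * expR (beta ^+ 4)^-1.
Proof.
set m := n.-1; have m_lt_n : (m < n)%N by rewrite ltn_predL.
pose D := \prod_(i < m) (1 - gam ^+ i.+1).
have D_gt0 : 0 < D by apply: prodr_gt0 => i _; rewrite subr_gt0 gamX_lt1.
have lyap_ge0 : 0 <= lyap n n by rewrite (le_trans ler01) ?lyap_ge1.
have pm_lyap_ge0 : 0 <= upProb n m * lyap n n by rewrite mulr_ge0 // ltW ?upProb_gt0.
have prod_split : \prod_(i < n) upProb n i = \prod_(i < m) upProb n i * upProb n m.
  by rewrite -!(big_mkord xpredT) /m -big_nat_recr //= prednK.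
have key : ccMu alpha beta nu0 * lyap n n * D <= \prod_(i < n) (1 + upProb n i).
  rewrite -lyap_prod // prod_split ccMuE.
  have -> : nu m * upProb n m * lyap n n * D = nu m * D * (upProb n m * lyap n n).
    by rewrite /D; ring.
  have -> : lyap n n * (\prod_(i < m) upProb n i * upProb n m)
      = \prod_(i < m) upProb n i * (upProb n m * lyap n n) by ring.
  apply: ler_wpM2r => //.
  by have := nu_prod_le (leq_pred n); rewrite -/m -/D.
rewrite -ler_pdivlMr // in key; apply: le_trans key _.
rewrite ler_pM ?divr_ge0 ?prodr_ge0 ?prod1D_upProb_le ?inv_prod_1BgamX_le ?ltW //.
- by move=> i _; rewrite addr_ge0 // ltW ?upProb_gt0.
- by rewrite invr_gt0.
Qed.

Lemma ccSurv_truncn_le (A : {set 'I_n}) x : 0 <= x ->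
  ccSurv alpha beta (Num.truncn (x / ccMu alpha beta nu0)) A <=
  expR 1 * expR 1 * expR (- ((expR beta^-1 * expR (beta ^+ 4)^-1 * expR 1 + 1)^-1 * x)).
Proof.
move=> x_ge0; have e_gt0 : 0 < expR 1 :> R := expR_gt0 1.
apply: le_trans (ccSurv_le_expR _ A n_gt0) _.
rewrite -mulrA ler_pM2l // -expRD ler_expR [_^-1 * x]mulrC.
apply: truncn_div_tail => //.
- exact: ccMu_gt0.
- by rewrite (le_trans ler01) ?lyap_ge1.
- by rewrite mulrDr mulr1 mulrA lerD ?ccMu_le1 // ler_wpM2r ?ccMu_lyap_le // ltW.
Qed.
End Stationary.
End Collector.

Unset Implicit Arguments.

Theorem mainTheorem17 (R : realType) (alpha beta : R) :
  0 <= alpha -> alpha < 1 -> 0 < beta -> beta < 1 ->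
  exists C c : R, 0 < C /\ 0 < c /\
  exists N : nat, forall n : nat, (N <= n)%N ->
  forall nu : 'I_n.+1 -> R, Kstationary alpha beta nu ->
  forall (A : {set 'I_n}) (x : R), 0 <= x ->
    ccSurv alpha beta (Num.truncn (x / ccMu alpha beta nu)) A
      <= C * expR (- (c * x)).
Proof.
move=> alpha_ge0 alpha_lt1 beta_gt0 beta_lt1.
set L := expR beta^-1 * expR (beta ^+ 4)^-1 * expR 1 + 1.
have L_gt0 : 0 < L by rewrite ltr_wpDl ?mulr_ge0 ?expR_ge0.
exists (expR 1 * expR 1), L^-1; split; first by rewrite mulr_gt0 ?expR_gt0.
split; first by rewrite invr_gt0.
exists 1%N => n n_gt0 nu nu_stationary A x x_ge0.
exact: ccSurv_truncn_le.
Qed.
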